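(* Assume $\rho$ satisfies the Loss Kernel Assumption, let $\xi\ge0$, let $X^{(k)}\in\mathcal X$, and define for $X\in\mathbb R^{d\times(d+1)n}$ $$G(X\mid X^{(k)})=\sum_{\alpha\in\mathcal A}\sum_{(i,j)\in\vec{\mathcal E}^{\alpha\alpha}}F^{\alpha\alpha}_{ij}(X)+\sum_{\alpha\ne\beta}\sum_{(i,j)\in\vec{\mathcal E}^{\alpha\beta}}E^{\alpha\beta}_{ij}(X\mid X^{(k)})+\tfrac{\xi}{2}\|X-X^{(k)}\|^2 .$$ Then there exist positive semidefinite matrices $\Gamma^{\alpha(k)}\in\mathbb R^{(d+1)n_\alpha\times(d+1)n_\alpha}$, $\alpha\in\mathcal A$ (depending on $X^{(k)}$), such that, with $\Gamma^{(k)}=\mathrm{diag}(\Gamma^{1(k)},\dots,\Gamma^{|\mathcal A|(k)})$: (a) $G(X\mid X^{(k)})=\sum_{\alpha\in\mathcal A}G^\alpha(X^\alpha\mid X^{(k)})+F(X^{(k)})$, where $G^\alpha(X^\alpha\mid X^{(k)})=\frac12\|X^\alpha-X^{\alpha(k)}\|^2_{\Gamma^{\alpha(k)}}+\langle\nabla_{X^\alpha}F(X^{(k)}),X^\alpha-X^{\alpha(k)}\rangle$; (b) $G(X\mid X^{(k)})=\frac12\|X-X^{(k)}\|^2_{\Gamma^{(k)}}+\langle\nabla F(X^{(k)}),X-X^{(k)}\rangle+F(X^{(k)})$, and $G(X\mid X^{(k)})\ge F(X)$ for all $X$, with equality if $X=X^{(k)}$; (c) $\Gamma^{(k)}\succeq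 M^{(k)}$; (d) there is a constant PSD matrix $\Gamma\in\mathbb R^{(d+1)n\times(d+1)n}$, independent of $X^{(k)}$, with $\Gamma\succeq\Gamma^{(k)}$ for every $X^{(k)}\in\mathcal X$.
   Context: Setup. Fix an integer $d\ge 2$, a finite set of nodes $\mathcal A=\{1,\dots,|\mathcal A|\}$, positive integers $n_\alpha$ ($\alpha\in\mathcal A$) and $n=\sum_{\alpha}n_\alpha$. An element $X\in\mathbb R^{d\times(d+1)n}$ is written $X=[X^1\ \cdots\ X^{|\mathcal A|}]$ with $X^\alpha=[t^\alpha\ R^\alpha]\in\mathbb R^{d\times(d+1)n_\alpha}$, where $t^\alpha=[t^\alpha_1\ \cdots\ t^\alpha_{n_\alpha}]$ with $t^\alpha_i\in\mathbb R^d$ and $R^\alpha=[R^\alpha_1\ \cdots\ R^\alpha_{n_\alpha}]$ with $R^\alpha_i\in\mathbb R^{d\times d}$; write $X^\alpha_i=[t^\alpha_i\ R^\alpha_i]\in\mathbb R^{d\times(d+1)}$. The feasible set is $\mathcal X=\{X:\ R^\alpha_i\in SO(d)\ \forall\alpha,i\}$; $X^{(k)}=[X^{1(k)}\ \cdots\ X^{|\mathcal A|(k)}]$. We use $\langle A,B\rangle=\mathrm{tr}(AB^\top)$, $\|\cdot\|$ the Frobenius norm, and for PSD $M$, $\|Y\|_M^2=\mathrm{tr}(YMY^\top)$. Data: for each ordered pair $(\alpha,\beta)\in\mathcal A\times\mathcal A$ (including $\alpha=\beta$) a finite set $\vec{\mathcal E}^{\alpha\beta}\subseteq\{1,\dots,n_\alpha\}\times\{1,\dots,n_\beta\}$,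 and for each $(i,j)\in\vec{\mathcal E}^{\alpha\beta}$ a rotation $\tilde R^{\alpha\beta}_{ij}\in SO(d)$, a vector $\tilde t^{\alpha\beta}_{ij}\in\mathbb R^d$ and weights $\kappa^{\alpha\beta}_{ij},\tau^{\alpha\beta}_{ij}\ge0$. For $(i,j)\in\vec{\mathcal E}^{\alpha\beta}$ define the quadratic form on $\mathbb R^{d\times(d+1)n}$ $$q^{\alpha\beta}_{ij}(X)=\kappa^{\alpha\beta}_{ij}\|R^\alpha_i\tilde R^{\alpha\beta}_{ij}-R^\beta_j\|^2+\tau^{\alpha\beta}_{ij}\|R^\alpha_i\tilde t^{\alpha\beta}_{ij}+t^\alpha_i-t^\beta_j\|^2 .$$ Loss Kernel Assumption: $\rho:\mathbb R^+\to\mathbb R$ ($\mathbb R^+=[0,\infty)$) satisfies (a) $\rho(s)\ge0$ with equality iff $s=0$; (b) $\rho$ is continuously differentiable on $\mathbb R^+$; (c) $\rho$ is concave; (d) $0\le\rho'(s)\le1$ for all $s\ge0$ and $\rho'(0)=1$; (e) $\varphi(X)=\rho(\|X\|^2)$ has Lipschitz continuous gradient on $\mathbb R^{m\times n}$. Define $F^{\alpha\alpha}_{ij}(X)=\frac12q^{\alpha\alpha}_{ij}(X)$ for $(i,j)\in\vec{\mathcal E}^{\alpha\alpha}$ and $F^{\alpha\beta}_{ij}(X)=\frac12\rho\big(q^{\alpha\beta}_{ij}(X)\big)$ for $\alpha\ne\beta$, $(i,j)\in\vec{\mathcal E}^{\alpha\beta}$ (defined on all of $\mathbb R^{d\times(d+1)n}$),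 and the objective $$F(X)=\sum_{\alpha\in\mathcal A}\sum_{(i,j)\in\vec{\mathcal E}^{\alpha\alpha}}F^{\alpha\alpha}_{ij}(X)+\sum_{\alpha\ne\beta}\sum_{(i,j)\in\vec{\mathcal E}^{\alpha\beta}}F^{\alpha\beta}_{ij}(X).$$ $\nabla$ denotes the Euclidean gradient and $\nabla_{X^\alpha}$ the partial gradient w.r.t. the block $X^\alpha$. Weights: $\omega^{\alpha\beta(k)}_{ij}=1$ if $\alpha=\beta$ and $\omega^{\alpha\beta(k)}_{ij}=\rho'\big(q^{\alpha\beta}_{ij}(X^{(k)})\big)$ if $\alpha\neq\beta$. Decoupled quadratic form: for $(i,j)\in\vec{\mathcal E}^{\alpha\beta}$, $$p^{\alpha\beta}_{ij}(X)=2\Big(\kappa^{\alpha\beta}_{ij}\|R^\alpha_i\|^2+\kappa^{\alpha\beta}_{ij}\|R^\beta_j\|^2+\tau^{\alpha\beta}_{ij}\|R^\alpha_i\tilde t^{\alpha\beta}_{ij}+t^\alpha_i\|^2+\tau^{\alpha\beta}_{ij}\|t^\beta_j\|^2\Big),$$ and $E^{\alpha\beta}_{ij}(X\mid X^{(k)})=\tfrac12\omega^{\alpha\beta(k)}_{ij}\,p^{\alpha\beta}_{ij}(X-X^{(k)})+\langle\nabla F^{\alpha\beta}_{ij}(X^{(k)}),X-X^{(k)}\rangle+F^{\alpha\beta}_{ij}(X^{(k)})$. The PSD matrix $M^{(k)}\in\mathbb R^{(d+1)n\times(d+1)n}$ is defined by $\|Y\|^2_{M^{(k)}}=\sum_{\alpha}\sum_{(i,j)\in\vec{\mathcal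 E}^{\alpha\alpha}}q^{\alpha\alpha}_{ij}(Y)+\sum_{\alpha\ne\beta}\sum_{(i,j)\in\vec{\mathcal E}^{\alpha\beta}}\omega^{\alpha\beta(k)}_{ij}q^{\alpha\beta}_{ij}(Y)$ for all $Y$. *)

From HB Require Import structures.
From mathcomp Require Import all_boot all_order all_algebra.
From mathcomp Require Import all_classical all_reals all_analysis.
Unset Printing Implicit Defensive.
Import Order.TTheory GRing.Theory Num.Theory.
Import numFieldNormedType.Exports.
Local Open Scope ring_scope.

Definition minner {R : realType} {m k : nat} (A B : 'M[R]_(m, k)) : R :=
  \tr (A *m B^T).

Definition fnorm2 {R : realType} {m k : nat} (A : 'M[R]_(m, k)) : R := minner A A.
Definition fnorm {R : realType} {m k : nat} (A : 'M[R]_(m, k)) : R :=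
  Num.sqrt (fnorm2 A).

Definition mnorm2 {R : realType} {m k : nat} (M : 'M[R]_k) (Y : 'M[R]_(m, k)) : R :=
  \tr (Y *m M *m Y^T).

Definition psd {R : realType} {k : nat} (M : 'M[R]_k) : Prop :=
  M^T = M /\ forall v : 'rV[R]_k, 0 <= (v *m M *m v^T) 0 0.

Definition rotation {R : realType} {d : nat} (Q : 'M[R]_d) : Prop :=
  Q^T *m Q = 1%:M /\ \det Q = 1.

Definition grad {R : realType} {m k : nat} (f : 'M[R]_(m, k) -> R)
    (X : 'M[R]_(m, k)) : 'M[R]_(m, k) :=
  \matrix_(i, j) derive1 (fun s : R => f (X + s *: delta_mx i j)) 0.

(* ---------- Loss Kernel Assumption ----------
   rho : R^+ -> R is modelled as rho : R -> R (only its values on [0,oo) are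
   ever used); rho' is its derivative on R^+ (one-sided at 0). *)
Definition loss_kernel {R : realType} (rho rho' : R -> R) : Prop :=
  (forall s : R, 0 <= s -> 0 <= rho s) /\
  (forall s, 0 <= s -> (rho s = 0 <-> s = 0)) /\
  (forall s : R, 0 < s -> is_derive s (1 : R) rho (rho' s)) /\
  (((fun h : R => h^-1 * (rho h - rho 0)) @ at_right (0 : R)) --> rho' 0)%classic /\
  {within [set s : R | 0 <= s], continuous rho'}%classic /\
  (forall x y t, 0 <= x -> 0 <= y -> 0 <= t -> t <= 1 ->
     t * rho x + (1 - t) * rho y <= rho (t * x + (1 - t) * y)) /\
  (forall s, 0 <= s -> 0 <= rho' s /\ rho' s <= 1) /\
  rho' 0 = 1 /\
  (forall m k : nat, exists L : R, forall X Y : 'M[R]_(m, k),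
     fnorm (grad (fun Z => rho (fnorm2 Z)) X - grad (fun Z => rho (fnorm2 Z)) Y)
       <= L * fnorm (X - Y)).

(* ---------- block structure ----------
   Node alpha : 'I_A has n alpha poses; X^alpha = [t^alpha R^alpha] has
   n_alpha + n_alpha * d = (d+1) n_alpha columns; X = [X^1 ... X^|A|]. *)
Definition bdim {A : nat} (d : nat) (n : 'I_A -> nat) (a : 'I_A) : nat :=
  (n a + n a * d)%N.

Definition Ntot {A : nat} (d : nat) (n : 'I_A -> nat) : nat :=
  (\sum_(a < A) bdim d n a)%N.

Definition blk {R : realType} {A d : nat} {n : 'I_A -> nat}
    (X : 'M[R]_(d, Ntot d n)) (a : 'I_A) : 'M[R]_(d, bdim d n a) :=
  @submxrow R A (bdim d n) d X a.

Definition tpos {R : realType} {A d : nat} {n : 'I_A -> nat}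
    (X : 'M[R]_(d, Ntot d n)) (a : 'I_A) (i : 'I_(n a)) : 'cV[R]_d :=
  col (lshift (n a * d) i) (blk X a).

Definition Rpos {R : realType} {A d : nat} {n : 'I_A -> nat}
    (X : 'M[R]_(d, Ntot d n)) (a : 'I_A) (i : 'I_(n a)) : 'M[R]_d :=
  \matrix_(r < d, c < d) blk X a r (rshift (n a) (mxvec_index i c)).

Definition feasible {R : realType} {A d : nat} {n : 'I_A -> nat}
    (X : 'M[R]_(d, Ntot d n)) : Prop :=
  forall (a : 'I_A) (i : 'I_(n a)), rotation (Rpos X a i).

Record pgo_data (R : realType) (d A : nat) (n : 'I_A -> nat) := PGOData {
  edges : forall a b : 'I_A, {set 'I_(n a) * 'I_(n b)};
  rotm  : forall a b : 'I_A, 'I_(n a) -> 'I_(n b) -> 'M[R]_d;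
  trv   : forall a b : 'I_A, 'I_(n a) -> 'I_(n b) -> 'cV[R]_d;
  kappa : forall a b : 'I_A, 'I_(n a) -> 'I_(n b) -> R;
  tau   : forall a b : 'I_A, 'I_(n a) -> 'I_(n b) -> R
}.
Arguments edges {R d A n} _ _ _.
Arguments rotm {R d A n} _ _ _ _ _.
Arguments trv {R d A n} _ _ _ _ _.
Arguments kappa {R d A n} _ _ _ _ _.
Arguments tau {R d A n} _ _ _ _ _.


Definition qf {R : realType} {d A : nat} {n : 'I_A -> nat} (D : pgo_data R d A n)
    (a b : 'I_A) (i : 'I_(n a)) (j : 'I_(n b)) (X : 'M[R]_(d, Ntot d n)) : R :=
  kappa D a b i j * fnorm2 (Rpos X a i *m rotm D a b i j - Rpos X b j) +
  tau D a b i j * fnorm2 (Rpos X a i *m trv D a b i j + tpos X a i - tpos X b j).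

Definition Fterm {R : realType} {d A : nat} {n : 'I_A -> nat} (rho : R -> R)
    (D : pgo_data R d A n) (a b : 'I_A) (i : 'I_(n a)) (j : 'I_(n b))
    (X : 'M[R]_(d, Ntot d n)) : R :=
  if a == b then qf D a b i j X / 2 else rho (qf D a b i j X) / 2.

Definition Fobj {R : realType} {d A : nat} {n : 'I_A -> nat} (rho : R -> R)
    (D : pgo_data R d A n) (X : 'M[R]_(d, Ntot d n)) : R :=
  \sum_(a < A) \sum_(e in edges D a a) Fterm rho D a a e.1 e.2 X +
  \sum_(a < A) \sum_(b < A | b != a) \sum_(e in edges D a b) Fterm rho D a b e.1 e.2 X.

Definition omega {R : realType} {d A : nat} {n : 'I_A -> nat} (rho' : R -> R)
    (D : pgo_data R d A n) (a b : 'I_A) (i : 'I_(n a)) (j : 'I_(n b))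
    (Xk : 'M[R]_(d, Ntot d n)) : R :=
  if a == b then 1 else rho' (qf D a b i j Xk).

Definition pdec {R : realType} {d A : nat} {n : 'I_A -> nat} (D : pgo_data R d A n)
    (a b : 'I_A) (i : 'I_(n a)) (j : 'I_(n b)) (X : 'M[R]_(d, Ntot d n)) : R :=
  2 * (kappa D a b i j * fnorm2 (Rpos X a i) + kappa D a b i j * fnorm2 (Rpos X b j)
       + tau D a b i j * fnorm2 (Rpos X a i *m trv D a b i j + tpos X a i)
       + tau D a b i j * fnorm2 (tpos X b j)).

Definition Eterm {R : realType} {d A : nat} {n : 'I_A -> nat} (rho rho' : R -> R)
    (D : pgo_data R d A n) (a b : 'I_A) (i : 'I_(n a)) (j : 'I_(n b))
    (X Xk : 'M[R]_(d, Ntot d n)) : R :=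
  1 / 2 * omega rho' D a b i j Xk * pdec D a b i j (X - Xk)
  + minner (grad (Fterm rho D a b i j) Xk) (X - Xk)
  + Fterm rho D a b i j Xk.

Definition Gsur {R : realType} {d A : nat} {n : 'I_A -> nat} (rho rho' : R -> R)
    (D : pgo_data R d A n) (xi : R) (X Xk : 'M[R]_(d, Ntot d n)) : R :=
  \sum_(a < A) \sum_(e in edges D a a) Fterm rho D a a e.1 e.2 X +
  \sum_(a < A) \sum_(b < A | b != a) \sum_(e in edges D a b)
      Eterm rho rho' D a b e.1 e.2 X Xk
  + xi / 2 * fnorm2 (X - Xk).

Definition is_Mk {R : realType} {d A : nat} {n : 'I_A -> nat} (rho' : R -> R)
    (D : pgo_data R d A n) (Xk : 'M[R]_(d, Ntot d n)) (M : 'M[R]_(Ntot d n)) : Prop :=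
  forall Y : 'M[R]_(d, Ntot d n),
    mnorm2 M Y =
      \sum_(a < A) \sum_(e in edges D a a) qf D a a e.1 e.2 Y +
      \sum_(a < A) \sum_(b < A | b != a) \sum_(e in edges D a b)
          omega rho' D a b e.1 e.2 Xk * qf D a b e.1 e.2 Y.

(* Each q^{ab}_{ij} is the quadratic form ||X||^2_Q of a positive semidefinite
   matrix Q supported on the blocks of nodes a and b, and p^{ab}_{ij} is likewise
   ||X||^2_P with P block diagonal, since p treats the two nodes separately; p
   dominates q because ||u - w||^2 <= 2||u||^2 + 2||w||^2 and a rotation is an
   isometry.  Concavity of rho gives the tangent bound
   rho(q(X)) <= rho(q(X^(k))) + rho'(q(X^(k))) (q(X) - q(X^(k))), so E^{ab}_{ij}
   majorizes F^{ab}_{ij}.  All terms being quadratic, G equals its exact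
   second-order expansion at X^(k), with the block-diagonal Hessian
   Gamma^(k) = sum Q^{aa}_{ij} + sum omega^{ab(k)}_{ij} P^{ab}_{ij} + xi I.
   Since q <= p and 0 <= omega <= 1, Gamma^(k) dominates M^(k) and is dominated
   by the same matrix with every omega replaced by 1. *)
From HB Require Import structures.
From mathcomp Require Import all_boot all_order all_algebra.
From mathcomp Require Import all_classical all_reals all_analysis.
From mathcomp Require Import ring lra.
Import Order.TTheory GRing.Theory Num.Theory.
Import numFieldNormedType.Exports.
Local Open Scope ring_scope.

Lemma is_derive_quadratic {R : realType} (c0 b c : R) :
  is_derive (0 : R) (1 : R) (fun s : R => c0 + s * b + s ^+ 2 * c) b.
Proof.
have -> : (fun s : R => c0 + s * b + s ^+ 2 * c) = cst c0 + id * cst b + (id * id) * cst c.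
  by apply/funext => s /=; rewrite expr2.
apply: is_derive_eq.
by rewrite /= !(scaler0, scale0r, add0r, addr0) /GRing.scale /= mulr1.
Qed.

Lemma is_derive1_comp {R : realType} (f g : R -> R) (x df dg : R) :
  is_derive x (1 : R) f df -> is_derive (f x) (1 : R) g dg ->
  is_derive x (1 : R) (g \o f) (dg * df).
Proof.
move=> Hf Hg; have f_der : derivable f x 1 by exact: ex_derive.
have g_der : derivable g (f x) 1 by exact: ex_derive.
split.
  by apply/derivable1_diffP/differentiable_comp; apply/derivable1_diffP.
by rewrite -derive1E derive1_comp // !derive1E !derive_val.
Qed.

Lemma is_derive_big {R : realType} (I : Type) (r : seq I) (P : pred I)
    (h : I -> R -> R) (dh : I -> R) (x : R) :
  (forall i, P i -> is_derive x (1 : R) (h i) (dh i)) ->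
  is_derive x (1 : R) (fun s => \sum_(i <- r | P i) h i s) (\sum_(i <- r | P i) dh i).
Proof.
move=> H; elim: r => [|i0 r IH].
  have -> : (fun s : R => \sum_(i <- [::] | P i) h i s) = cst 0.
    by apply/funext => s; rewrite big_nil.
  by rewrite big_nil; exact: is_derive_cst.
case Pi0: (P i0); last first.
  have -> : (fun s : R => \sum_(i <- i0 :: r | P i) h i s) =
            (fun s => \sum_(i <- r | P i) h i s).
    by apply/funext => s; rewrite big_cons Pi0.
  by rewrite big_cons Pi0.
have -> : (fun s : R => \sum_(i <- i0 :: r | P i) h i s) =
          h i0 + (fun s => \sum_(i <- r | P i) h i s).
  by apply/funext => s; rewrite big_cons Pi0.
by rewrite big_cons Pi0; exact: is_deriveD (H i0 Pi0) IH.
Qed.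

Lemma is_derive_half {R : realType} (f : R -> R) (x df : R) :
  is_derive x (1 : R) f df -> is_derive x (1 : R) (fun s => f s / 2) (df / 2).
Proof.
move=> H; have -> : (fun s => f s / 2) = f * cst (2^-1) by apply/funext.
by apply: is_derive_eq; rewrite /cst /= /GRing.scale /= mulr0 add0r mulrC.
Qed.

Lemma cvg_dnbhs_at_right {R : realType} {f : R -> R} {l : R} :
  (f @ 0^' --> l)%classic -> (f @ 0^'+ --> l)%classic.
Proof.
move=> H; apply: (cvg_trans _ H); apply: cvg_app => P /=.
rewrite /at_right /dnbhs /within /nbhs /= => HP.
by apply: filterS HP => x Px x_gt0; apply: Px; exact: lt0r_neq0.
Qed.

Section LossKernel.
Context {R : realType} {rho rho' : R -> R}.
Hypothesis LK : loss_kernel rho rho'.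

Lemma loss_kernel_rho0 : rho 0 = 0.
Proof. by case: LK => _ [H _]; apply/(H 0 (lexx 0)). Qed.

Lemma loss_kernel_deriv_bounds s : 0 <= s -> 0 <= rho' s <= 1.
Proof. by have [_ [_ [_ [_ [_ [_ [H _]]]]]]] := LK => /H[-> ->]. Qed.

Lemma loss_kernel_le_id y : 0 <= y -> rho y <= y.
Proof.
have r0 := loss_kernel_rho0.
have [_ [_ [_ [Hr [_ [Hc [_ [H1 _]]]]]]]] := LK.
rewrite le_eqVlt => /orP[/eqP<-|y_gt0]; first by rewrite r0.
(* the chord slopes of a concave function through the origin increase towards rho' 0 *)
suff : (rho y - rho 0) / y <= rho' 0 by rewrite H1 r0 subr0 ler_pdivrMr // mul1r.
apply: (cvgr_to_ge Hr); near=> h.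
have h_gt0 : 0 < h by near: h; exact: nbhs_right_gt.
have h_lty : h < y by near: h; exact: nbhs_right_lt.
have Hh : h / y * rho y <= rho h.
  have := Hc y 0 (h / y) (ltW y_gt0) (lexx 0) (divr_ge0 (ltW h_gt0) (ltW y_gt0)).
  rewrite r0 mulr0 !addr0 divfK ?gt_eqF //; apply.
  by rewrite ler_pdivrMr // mul1r ltW.
rewrite r0 !subr0 [X in _ <= X]mulrC ler_pdivlMr //.
by apply: le_trans Hh; rewrite mulrC mulrA mulrAC.
Unshelve. all: by end_near.
Qed.

Lemma loss_kernel_rho_le z : 0 <= z -> 0 <= rho z <= z.
Proof. by move=> z_ge0; case: LK => rho_ge0 _; rewrite rho_ge0 // loss_kernel_le_id. Qed.

Lemma loss_kernel_tangent x y : 0 <= x -> 0 <= y -> rho y <= rho x + rho' x * (y - x).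
Proof.
have [_ [_ [Hd [_ [_ [Hc [_ [H1 _]]]]]]]] := LK.
rewrite le_eqVlt => /orP[/eqP<-|x_gt0] y_ge0.
  by rewrite H1 mul1r subr0 loss_kernel_rho0 add0r loss_kernel_le_id.
have dg : is_derive (0 : R) (1 : R) (fun h => rho (x + h * (y - x))) (rho' x * (y - x)).
  apply: (@is_derive1_comp _ (fun h => x + h * (y - x))).
    have := is_derive_quadratic x (y - x) 0.
    by have -> : (fun s : R => x + s * (y - x) + s ^+ 2 * 0) = (fun h => x + h * (y - x))
      by apply/funext => s; rewrite mulr0 addr0.
  by rewrite /= mul0r addr0; exact: Hd.
have Hq : ((fun h : R => h^-1 *: (((fun h : R => rho (x + h * (y - x))) \o shift 0) (h *: 1)
    - rho (x + 0 * (y - x)))) @ 0^' --> 'D_1 (fun h : R => rho (x + h * (y - x))) 0)%classic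
  := @ex_derive _ _ _ _ _ _ _ dg.
have := cvg_dnbhs_at_right Hq; rewrite derive_val => Hlim.
suff : rho y - rho x <= rho' x * (y - x) by rewrite lerBlDl.
apply: (cvgr_to_ge Hlim); near=> h.
have h_gt0 : 0 < h by near: h; exact: nbhs_right_gt.
have h_lt1 : h < 1 by near: h; exact: nbhs_right_lt.
have := Hc y x h y_ge0 (ltW x_gt0) (ltW h_gt0) (ltW h_lt1).
rewrite /comp /shift /= mul0r !addr0.
have -> : x + h%:A * (y - x) = h * y + (1 - h) * x by rewrite /GRing.scale /= mulr1; ring.
rewrite /GRing.scale /= ler_pdivlMl // mulrBr mulrBl mul1r => Hh.
lra.
Unshelve. all: by end_near.
Qed.

(* At c0 = 0 the kernel is only one-sidedly differentiable; the hypothesis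
   c0 = 0 -> b = 0 makes the argument of rho vanish to second order there. *)
Lemma is_derive_rho_quadratic c0 b c : 0 <= c0 -> 0 <= c -> (c0 = 0 -> b = 0) ->
  is_derive (0 : R) (1 : R) (fun s => rho (c0 + s * b + s ^+ 2 * c)) (rho' c0 * b).
Proof.
rewrite le_eqVlt => /orP[/eqP<-|c0_gt0] c_ge0 Hb; last first.
  apply: (@is_derive1_comp _ (fun s => c0 + s * b + s ^+ 2 * c) rho _ _ _
    (is_derive_quadratic c0 b c)).
  rewrite /= mul0r addr0 expr0n /= mul0r addr0.
  by have [_ [_ [Hd _]]] := LK; exact: Hd.
rewrite Hb // mulr0; set f := fun s => rho (0 + s * 0 + s ^+ 2 * c).
have lim0 : ((fun h : R => h^-1 *: ((f \o shift 0) (h *: 1) - f 0)) @ 0^' --> (0 : R))%classic.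
  apply/cvgr0Pnorm_lt => e e_gt0; near=> h.
  have hb : `|h| < e / (c + 1) by near: h; apply: dnbhs0_lt; rewrite divr_gt0 // ltr_wpDl.
  rewrite /f /comp /shift /= !mulr0 !add0r !addr0 expr0n /= mul0r loss_kernel_rho0 subr0.
  rewrite /GRing.scale /= mulr1.
  have /andP[r1 r2] := loss_kernel_rho_le _ (mulr_ge0 (sqr_ge0 h) c_ge0).
  rewrite normrM (ger0_norm r1) normfV.
  have [->|h_neq0] := eqVneq h 0; first by rewrite normr0 invr0 mul0r.
  have h_gt0 : 0 < `|h| by rewrite normr_gt0.
  apply: (le_lt_trans (y := `|h| * c)).
    by rewrite ler_pdivrMl // mulrA -expr2 -normrX ger0_norm ?sqr_ge0.
  apply: (le_lt_trans (y := `|h| * (c + 1))); first by rewrite ler_pM2l // lerDl.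
  by rewrite -ltr_pdivlMr // ltr_wpDl.
split; [by apply/cvg_ex; exists 0 | exact: cvg_lim lim0].
Unshelve. all: by end_near.
Qed.

End LossKernel.

Section MatrixForms.
Context {R : realType}.

Lemma minnerC {m k : nat} (X Y : 'M[R]_(m, k)) : minner X Y = minner Y X.
Proof. by rewrite /minner -mxtrace_tr trmx_mul trmxK. Qed.

Lemma minnerDl {m k : nat} (X Y Z : 'M[R]_(m, k)) : minner (X + Y) Z = minner X Z + minner Y Z.
Proof. by rewrite /minner mulmxDl mxtraceD. Qed.

Lemma minnerZl {m k : nat} (a : R) (X Z : 'M[R]_(m, k)) : minner (a *: X) Z = a * minner X Z.
Proof. by rewrite /minner -scalemxAl mxtraceZ. Qed.

Lemma minnerDr {m k : nat} (X Y Z : 'M[R]_(m, k)) : minner Z (X + Y) = minner Z X + minner Z Y.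
Proof. by rewrite minnerC minnerDl !(minnerC Z). Qed.

Lemma minnerZr {m k : nat} (a : R) (X Z : 'M[R]_(m, k)) : minner Z (a *: X) = a * minner Z X.
Proof. by rewrite minnerC minnerZl minnerC. Qed.

Lemma minnerNl {m k : nat} (X Z : 'M[R]_(m, k)) : minner (- X) Z = - minner X Z.
Proof. by rewrite -scaleN1r minnerZl mulN1r. Qed.

Lemma minnerNr {m k : nat} (X Z : 'M[R]_(m, k)) : minner Z (- X) = - minner Z X.
Proof. by rewrite -scaleN1r minnerZr mulN1r. Qed.

Lemma minner0l {m k : nat} (Z : 'M[R]_(m, k)) : minner 0 Z = 0.
Proof. by rewrite /minner mul0mx mxtrace0. Qed.

Lemma minner0r {m k : nat} (Z : 'M[R]_(m, k)) : minner Z 0 = 0.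
Proof. by rewrite minnerC minner0l. Qed.

Lemma minner_suml {m k : nat} (I : Type) (r : seq I) (P : pred I)
    (F : I -> 'M[R]_(m, k)) Z :
  minner (\sum_(i <- r | P i) F i) Z = \sum_(i <- r | P i) minner (F i) Z.
Proof.
by apply: (big_morph (minner^~ Z)); [move=> x y; rewrite minnerDl | exact: minner0l].
Qed.

Lemma minner_delta_mx {m k : nat} (G : 'M[R]_(m, k)) i j : minner G (delta_mx i j) = G i j.
Proof.
rewrite /minner trmx_delta /mxtrace (bigD1 i) //= big1 ?addr0.
  rewrite mxE (bigD1 j) //= big1 ?addr0; first by rewrite mxE !eqxx mulr1.
  by move=> l /negbTE lj; rewrite mxE lj mulr0.
move=> l /negbTE li; rewrite mxE big1 // => u _.
by rewrite mxE li andbF mulr0.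
Qed.

Lemma fnorm2_ge0 {m k : nat} (X : 'M[R]_(m, k)) : 0 <= fnorm2 X.
Proof.
rewrite /fnorm2 /minner /mxtrace; apply: sumr_ge0 => i _; rewrite mxE.
by apply: sumr_ge0 => j _; rewrite mxE -expr2 sqr_ge0.
Qed.

Lemma fnorm2_eq0 {m k : nat} (X : 'M[R]_(m, k)) : fnorm2 X = 0 -> X = 0.
Proof.
rewrite /fnorm2 /minner /mxtrace => /eqP; rewrite psumr_eq0 => [/allP H|i _].
  apply/matrixP => i j; rewrite mxE.
  have /implyP := H i (mem_index_enum _); rewrite /= => /(_ isT).
  rewrite mxE psumr_eq0 => [/allP H2|l _]; last by rewrite mxE -expr2 sqr_ge0.
  have /implyP := H2 j (mem_index_enum _); rewrite /= mxE -expr2 sqrf_eq0 => /(_ isT).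
  by move/eqP.
by rewrite mxE; apply: sumr_ge0 => j _; rewrite mxE -expr2 sqr_ge0.
Qed.

Lemma fnorm2B_le {p q : nat} (u w : 'M[R]_(p, q)) :
  fnorm2 (u - w) <= 2 * fnorm2 u + 2 * fnorm2 w.
Proof.
have h1 : fnorm2 (u - w) = fnorm2 u - 2 * minner u w + fnorm2 w.
  by rewrite /fnorm2 !(minnerDl, minnerDr, minnerNl, minnerNr) (minnerC w u); ring.
have h2 : fnorm2 (u + w) = fnorm2 u + 2 * minner u w + fnorm2 w.
  by rewrite /fnorm2 !(minnerDl, minnerDr) (minnerC w u); ring.
have := fnorm2_ge0 (u + w); lra.
Qed.

Lemma fnorm2_mulmx {m k l : nat} (X : 'M[R]_(m, k)) (P : 'M[R]_(k, l)) :
  fnorm2 (X *m P) = mnorm2 (P *m P^T) X.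
Proof. by rewrite /fnorm2 /minner /mnorm2 trmx_mul !mulmxA. Qed.

Lemma fnorm2_mulmx_rotation {p d : nat} (M : 'M[R]_(p, d)) (Q : 'M[R]_d) :
  rotation Q -> fnorm2 (M *m Q) = fnorm2 M.
Proof.
by case=> /mulmx1C QQ _; rewrite fnorm2_mulmx /mnorm2 QQ mulmx1.
Qed.

Lemma mnorm2Dl {m k : nat} (M1 M2 : 'M[R]_k) (Y : 'M[R]_(m, k)) :
  mnorm2 (M1 + M2) Y = mnorm2 M1 Y + mnorm2 M2 Y.
Proof. by rewrite /mnorm2 mulmxDr mulmxDl mxtraceD. Qed.

Lemma mnorm2Zl {m k : nat} (a : R) (M : 'M[R]_k) (Y : 'M[R]_(m, k)) :
  mnorm2 (a *: M) Y = a * mnorm2 M Y.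
Proof. by rewrite /mnorm2 -scalemxAr -scalemxAl mxtraceZ. Qed.

Lemma mnorm2Bl {m k : nat} (M1 M2 : 'M[R]_k) (Y : 'M[R]_(m, k)) :
  mnorm2 (M1 - M2) Y = mnorm2 M1 Y - mnorm2 M2 Y.
Proof. by rewrite mnorm2Dl -scaleN1r mnorm2Zl mulN1r. Qed.

Lemma mnorm2_0l {m k : nat} (Y : 'M[R]_(m, k)) : mnorm2 0 Y = 0.
Proof. by rewrite /mnorm2 mulmx0 mul0mx mxtrace0. Qed.

Lemma mnorm2_0r {m k : nat} (M : 'M[R]_k) : mnorm2 M (0 : 'M[R]_(m, k)) = 0.
Proof. by rewrite /mnorm2 !mul0mx mxtrace0. Qed.

Lemma mnorm2_1 {m k : nat} (Y : 'M[R]_(m, k)) : mnorm2 1%:M Y = fnorm2 Y.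
Proof. by rewrite /mnorm2 mulmx1. Qed.

Lemma mnorm2Zr {m k : nat} (H : 'M[R]_k) (s : R) (Y : 'M[R]_(m, k)) :
  mnorm2 H (s *: Y) = s ^+ 2 * mnorm2 H Y.
Proof. by rewrite /mnorm2 linearZ /= -!scalemxAl -scalemxAr !mxtraceZ mulrA expr2. Qed.

Lemma mnorm2_expand {m k : nat} (H : 'M[R]_k) (X Y : 'M[R]_(m, k)) : H^T = H ->
  mnorm2 H (X + Y) = mnorm2 H X + 2 * minner (X *m H) Y + mnorm2 H Y.
Proof.
move=> HT; rewrite /mnorm2 /minner linearD /= !mulmxDl !mulmxDr !mxtraceD.
have -> : \tr (Y *m H *m X^T) = \tr (X *m H *m Y^T).
  by rewrite -mxtrace_tr !trmx_mul trmxK HT mulmxA.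
by rewrite mulr2n mulrDl !mul1r; ring.
Qed.

(* The quadratic form v M v^T of a row vector is ||E v||^2_M for the m x N
   matrix E v whose only nonzero row is v. *)
Lemma psd_mnorm2 {m N : nat} (M : 'M[R]_N) : (0 < m)%N ->
  M^T = M -> (forall Y : 'M[R]_(m, N), 0 <= mnorm2 M Y) -> psd M.
Proof.
move=> m_gt0 MT M_ge0; split => // v; pose i0 : 'I_m := Ordinal m_gt0.
suff -> : (v *m M *m v^T) 0 0 = mnorm2 M ((delta_mx i0 (0 : 'I_1) : 'cV[R]_m) *m v) by [].
rewrite /mnorm2 trmx_mul !mulmxA -(mulmxA (delta_mx i0 0)) -(mulmxA (delta_mx i0 0)).
set W := v *m M *m v^T.
rewrite (mxtrace_mulC (delta_mx i0 0 *m W) (delta_mx i0 0)^T) mulmxA trmx_delta.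
rewrite mul_delta_mx /mxtrace big_ord1 [in RHS]mxE big_ord1 mxE.
by rewrite [delta_mx _ _ _ _]mxE /= mul1r.
Qed.

End MatrixForms.

Definition selmx {R : realType} {N k : nat} (f : 'I_k -> 'I_N) : 'M[R]_(N, k) :=
  \matrix_(u, c) (u == f c)%:R.

Lemma mul_selmx {R : realType} {m N k : nat} (X : 'M[R]_(m, N)) (f : 'I_k -> 'I_N) :
  X *m selmx f = \matrix_(r, c) X r (f c).
Proof.
apply/matrixP => r c; rewrite !mxE (bigD1 (f c)) //= mxE eqxx mulr1 big1 ?addr0 //.
by move=> u /negbTE; rewrite mxE => ->; rewrite mulr0.
Qed.

Lemma mul_tr_selmx {R : realType} {m N k : nat} (f : 'I_k -> 'I_N) (Y : 'M[R]_(N, m)) :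
  (selmx f)^T *m Y = \matrix_(c, r) Y (f c) r.
Proof.
apply: trmx_inj; rewrite trmx_mul trmxK mul_selmx.
by apply/matrixP => i j; rewrite !mxE.
Qed.

Lemma psd_submxblock {R : realType} {A : nat} {p_ : 'I_A -> nat}
    (M : 'M[R]_(\sum_i p_ i)) a :
  psd M -> psd (submxblock M a a).
Proof.
have -> : submxblock M a a =
    (selmx (@tagnat.Rank A p_ a))^T *m M *m selmx (@tagnat.Rank A p_ a).
  by rewrite -mulmxA mul_selmx mul_tr_selmx; apply/matrixP => i j; rewrite !mxE.
case=> MT M_ge0; split; first by rewrite !trmx_mul trmxK MT mulmxA.
by move=> v; have := M_ge0 (v *m (selmx (@tagnat.Rank A p_ a))^T); rewrite trmx_mul trmxK !mulmxA.
Qed.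

Section BlockStructure.
Context {R : realType} {d A : nat} {n : 'I_A -> nat}.
Local Notation N := (Ntot d n).
Local Notation rank a v := (@tagnat.Rank A (bdim d n) a v).
Local Notation node u := (@tagnat.sig1 A (bdim d n) u).

Definition selR (a : 'I_A) (i : 'I_(n a)) : 'M[R]_(N, d) :=
  selmx (fun c => rank a (rshift (n a) (mxvec_index i c))).

Definition selt (a : 'I_A) (i : 'I_(n a)) : 'M[R]_(N, 1) :=
  selmx (fun _ => rank a (lshift (n a * d) i)).

Lemma Rpos_selR (X : 'M[R]_(d, N)) a i : Rpos X a i = X *m selR a i.
Proof. by rewrite /selR mul_selmx; apply/matrixP => r c; rewrite !mxE. Qed.

Lemma tpos_selt (X : 'M[R]_(d, N)) a i : tpos X a i = X *m selt a i.
Proof. by rewrite /selt mul_selmx; apply/matrixP => r c; rewrite !mxE. Qed.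

Definition supported (a : 'I_A) {k : nat} (P : 'M[R]_(N, k)) :=
  forall (u : 'I_N) l, node u != a -> P u l = 0.

Lemma supported_selR a i : supported a (selR a i).
Proof.
move=> u l H; rewrite mxE; case: eqP => // e.
by rewrite e tagnat.Rank1K eqxx in H.
Qed.

Lemma supported_selt a i : supported a (selt a i).
Proof.
move=> u l H; rewrite mxE; case: eqP => // e.
by rewrite e tagnat.Rank1K eqxx in H.
Qed.

Lemma supportedD a k (P Q : 'M[R]_(N, k)) : supported a P -> supported a Q -> supported a (P + Q).
Proof. by move=> HP HQ u l H; rewrite mxE HP // HQ // addr0. Qed.

Lemma supportedN a k (P : 'M[R]_(N, k)) : supported a P -> supported a (- P).
Proof. by move=> HP u l H; rewrite mxE HP // oppr0. Qed.

Lemma supportedM a k l (P : 'M[R]_(N, k)) (M : 'M[R]_(k, l)) :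
  supported a P -> supported a (P *m M).
Proof. by move=> HP u c H; rewrite mxE big1 // => v _; rewrite HP // mul0r. Qed.

Definition blockdiag (M : 'M[R]_N) := forall u w : 'I_N, node u != node w -> M u w = 0.

Lemma blockdiagD M1 M2 : blockdiag M1 -> blockdiag M2 -> blockdiag (M1 + M2).
Proof. by move=> H1 H2 u w H; rewrite mxE H1 // H2 // addr0. Qed.

Lemma blockdiagZ c M : blockdiag M -> blockdiag (c *: M).
Proof. by move=> H1 u w H; rewrite mxE H1 // mulr0. Qed.

Lemma blockdiag1 : blockdiag 1%:M.
Proof. by move=> u w H; rewrite mxE; case: eqP => // uw; rewrite uw eqxx in H. Qed.

Lemma blockdiag_sum (I : Type) (r : seq I) (P : pred I) (F : I -> 'M[R]_N) :
  (forall i, P i -> blockdiag (F i)) -> blockdiag (\sum_(i <- r | P i) F i).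
Proof.
move=> H; elim: r => [|x r IH]; first by rewrite big_nil => u w _; rewrite mxE.
by rewrite big_cons; case: ifP => Px //; exact: blockdiagD (H _ Px) IH.
Qed.

Lemma blockdiag_mxdiag (M : 'M[R]_N) : blockdiag M -> mxdiag (fun a => submxblock M a a) = M.
Proof.
move=> H; apply/esym/mxblockP => i j; rewrite /mxdiag mxblockK.
case: eqVneq => [<-|ne]; first by rewrite conform_mx_id.
by apply/matrixP => k l; rewrite !mxE; apply: H; rewrite !tagnat.Rank1K.
Qed.

Lemma minner_blk (G Y : 'M[R]_(d, N)) :
  minner G Y = \sum_(a < A) minner (blk G a) (blk Y a).
Proof.
rewrite /minner -{1}(submxrowK G) -{1}(submxrowK Y) tr_mxrow mul_mxrow_mxcol.
by rewrite raddf_sum.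
Qed.

Lemma mnorm2_mxdiag (G : forall a, 'M[R]_(bdim d n a)) (Y : 'M[R]_(d, N)) :
  mnorm2 (mxdiag G) Y = \sum_(a < A) mnorm2 (G a) (blk Y a).
Proof.
rewrite /mnorm2 -{1}(submxrowK Y) -{2}(submxrowK Y) mul_mxrow_mxdiag tr_mxrow.
by rewrite mul_mxrow_mxcol raddf_sum.
Qed.

Definition wgram (w : R) {k : nat} (P : 'M[R]_(N, k)) : 'M[R]_N := w *: (P *m P^T).

Lemma mnorm2_wgram w k (P : 'M[R]_(N, k)) (X : 'M[R]_(d, N)) :
  mnorm2 (wgram w P) X = w * fnorm2 (X *m P).
Proof. by rewrite mnorm2Zl fnorm2_mulmx. Qed.

Lemma wgram_sym w k (P : 'M[R]_(N, k)) : (wgram w P)^T = wgram w P.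
Proof. by rewrite /wgram linearZ /= trmx_mul trmxK. Qed.

Lemma minner_wgram w k (P : 'M[R]_(N, k)) (X E : 'M[R]_(d, N)) :
  minner (X *m wgram w P) E = w * minner (X *m P) (E *m P).
Proof. by rewrite /wgram -scalemxAr minnerZl /minner trmx_mul !mulmxA. Qed.

Lemma blockdiag_wgram a w k (P : 'M[R]_(N, k)) : supported a P -> blockdiag (wgram w P).
Proof.
move=> HP; apply: blockdiagZ => u v uv; rewrite mxE big1 // => l _; rewrite mxE.
have [ua|ua] := eqVneq (node u) a; last by rewrite (HP u) // mul0r.
by rewrite (HP v) ?mulr0 // -ua eq_sym.
Qed.

End BlockStructure.

Section EdgeForms.
Context {R : realType} {d A : nat} {n : 'I_A -> nat} (D : pgo_data R d A n).
Local Notation N := (Ntot d n).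

Definition rot_resid_mx a b i j := selR a i *m rotm D a b i j - selR b j.
Definition tr_anchor_mx a b i j := selR a i *m trv D a b i j + selt a i.
Definition tr_resid_mx a b i j := tr_anchor_mx a b i j - selt b j.

Definition q_mx a b i j : 'M[R]_N :=
  wgram (kappa D a b i j) (rot_resid_mx a b i j) + wgram (tau D a b i j) (tr_resid_mx a b i j).
Definition p_mx a b i j : 'M[R]_N :=
  2 *: (wgram (kappa D a b i j) (selR a i) + wgram (kappa D a b i j) (selR b j)
        + wgram (tau D a b i j) (tr_anchor_mx a b i j) + wgram (tau D a b i j) (selt b j)).

Lemma qf_mnorm2 a b i j X : qf D a b i j X = mnorm2 (q_mx a b i j) X.
Proof.
rewrite /qf /q_mx /rot_resid_mx /tr_resid_mx /tr_anchor_mx.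
rewrite !Rpos_selR !tpos_selt mnorm2Dl !mnorm2_wgram.
by rewrite !mulmxBr !mulmxDr !mulmxA.
Qed.

Lemma pdec_mnorm2 a b i j X : pdec D a b i j X = mnorm2 (p_mx a b i j) X.
Proof.
rewrite /pdec /p_mx /tr_anchor_mx mnorm2Zl !mnorm2Dl !mnorm2_wgram.
by rewrite !Rpos_selR !tpos_selt !mulmxDr !mulmxA.
Qed.

Lemma q_mx_sym a b i j : (q_mx a b i j)^T = q_mx a b i j.
Proof. by rewrite /q_mx linearD /= !wgram_sym. Qed.

Lemma p_mx_sym a b i j : (p_mx a b i j)^T = p_mx a b i j.
Proof. by rewrite /p_mx linearZ /= !linearD /= !wgram_sym. Qed.

Lemma blockdiag_q_mx a i j : blockdiag (q_mx a a i j).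
Proof.
have Ha := supported_selR a; have Ht := supported_selt a.
apply: blockdiagD; apply: (@blockdiag_wgram _ _ _ _ a).
  by apply: supportedD; [apply: supportedM | apply: supportedN].
by apply: supportedD; [apply: supportedD; [apply: supportedM|] | apply: supportedN].
Qed.

Lemma blockdiag_p_mx a b i j : blockdiag (p_mx a b i j).
Proof.
apply/blockdiagZ/blockdiagD; [apply: blockdiagD; [apply: blockdiagD|]|].
- by apply: (@blockdiag_wgram _ _ _ _ a); exact: supported_selR.
- by apply: (@blockdiag_wgram _ _ _ _ b); exact: supported_selR.
- apply: (@blockdiag_wgram _ _ _ _ a); apply: supportedD; last exact: supported_selt.
  exact/supportedM/supported_selR.
- by apply: (@blockdiag_wgram _ _ _ _ b); exact: supported_selt.
Qed.

Context {a b : 'I_A} {i : 'I_(n a)} {j : 'I_(n b)}.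
Hypotheses (kappa_ge0 : 0 <= kappa D a b i j) (tau_ge0 : 0 <= tau D a b i j).

Lemma qf_ge0 (X : 'M[R]_(d, N)) : 0 <= qf D a b i j X.
Proof. by rewrite /qf addr_ge0 // mulr_ge0 // fnorm2_ge0. Qed.

Lemma pdec_ge0 (X : 'M[R]_(d, N)) : 0 <= pdec D a b i j X.
Proof. by rewrite /pdec mulr_ge0 // !addr_ge0 // mulr_ge0 // fnorm2_ge0. Qed.

Lemma qf_le_pdec (X : 'M[R]_(d, N)) : rotation (rotm D a b i j) ->
  qf D a b i j X <= pdec D a b i j X.
Proof.
move=> rot; rewrite /qf /pdec.
have h1 := fnorm2B_le (Rpos X a i *m rotm D a b i j) (Rpos X b j).
rewrite fnorm2_mulmx_rotation // in h1.
have h2 := fnorm2B_le (Rpos X a i *m trv D a b i j + tpos X a i) (tpos X b j).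
have := ler_wpM2l kappa_ge0 h1; have := ler_wpM2l tau_ge0 h2.
rewrite !mulrDr; lra.
Qed.

Lemma mnorm2_q_mx_eq0 (X E : 'M[R]_(d, N)) :
  mnorm2 (q_mx a b i j) X = 0 -> minner (X *m q_mx a b i j) E = 0.
Proof.
rewrite /q_mx mulmxDr minnerDl !minner_wgram mnorm2Dl !mnorm2_wgram.
have f1 := fnorm2_ge0 (X *m rot_resid_mx a b i j).
have f2 := fnorm2_ge0 (X *m tr_resid_mx a b i j).
move/eqP; rewrite paddr_eq0 ?mulr_ge0 // => /andP[/eqP e1 /eqP e2].
have vanish w k (Q Q' : 'M[R]_(d, k)) : w * fnorm2 Q = 0 -> w * minner Q Q' = 0.
  move=> /eqP; rewrite mulf_eq0 => /orP[/eqP->|/eqP/fnorm2_eq0->].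
    by rewrite mul0r.
  by rewrite minner0l mulr0.
by rewrite (vanish _ _ _ _ e1) (vanish _ _ _ _ e2) addr0.
Qed.

End EdgeForms.

Section Gradients.
Context {R : realType} {m k : nat}.

Definition hasgrad (f : 'M[R]_(m, k) -> R) (X G : 'M[R]_(m, k)) :=
  forall E, is_derive (0 : R) (1 : R) (fun s => f (X + s *: E)) (minner G E).

Lemma hasgrad_grad {f X G} : hasgrad f X G -> grad f X = G.
Proof.
move=> H; apply/matrixP => i j; rewrite mxE derive1E.
by rewrite (@derive_val _ _ _ _ _ _ _ (H (delta_mx i j))) minner_delta_mx.
Qed.

Lemma hasgrad_quadratic f X G :
  (forall E, exists c0 c, forall s, f (X + s *: E) = c0 + s * minner G E + s ^+ 2 * c) ->
  hasgrad f X G.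
Proof.
move=> H E; have [c0 [c Hs]] := H E.
have -> : (fun s => f (X + s *: E)) = (fun s => c0 + s * minner G E + s ^+ 2 * c).
  exact/funext.
exact: is_derive_quadratic.
Qed.

Lemma hasgradD f g X F G : hasgrad f X F -> hasgrad g X G ->
  hasgrad (fun Y => f Y + g Y) X (F + G).
Proof. by move=> Hf Hg E; rewrite minnerDl; exact: is_deriveD (Hf E) (Hg E). Qed.

Lemma hasgrad_big (I : Type) (r : seq I) (P : pred I) (f : I -> 'M[R]_(m, k) -> R) X G :
  (forall i, P i -> hasgrad (f i) X (G i)) ->
  hasgrad (fun Y => \sum_(i <- r | P i) f i Y) X (\sum_(i <- r | P i) G i).
Proof.
move=> H E; rewrite minner_suml.
apply: (@is_derive_big _ I r P (fun i s => f i (X + s *: E)) (fun i => minner (G i) E)).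
by move=> i Pi; exact: H.
Qed.

End Gradients.

Section EdgeTerms.
Context {R : realType} {d A : nat} {n : 'I_A -> nat} (D : pgo_data R d A n).
Context (rho rho' : R -> R).
Hypothesis LK : loss_kernel rho rho'.
Local Notation N := (Ntot d n).

Lemma Fterm_intra_expand a i j (Xk W : 'M[R]_(d, N)) :
  Fterm rho D a a i j (Xk + W) =
    1 / 2 * qf D a a i j W + minner (Xk *m q_mx D a a i j) W + Fterm rho D a a i j Xk.
Proof. by rewrite /Fterm eqxx !qf_mnorm2 mnorm2_expand ?q_mx_sym //; field. Qed.

Lemma hasgrad_Fterm_intra a i j (Xk : 'M[R]_(d, N)) :
  hasgrad (Fterm rho D a a i j) Xk (Xk *m q_mx D a a i j).
Proof.
apply: hasgrad_quadratic => E; exists (Fterm rho D a a i j Xk), (qf D a a i j E / 2) => s.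
by rewrite Fterm_intra_expand minnerZr !qf_mnorm2 mnorm2Zr; ring.
Qed.

Context {a b : 'I_A} {i : 'I_(n a)} {j : 'I_(n b)}.
Hypotheses (a_neq_b : a != b) (kappa_ge0 : 0 <= kappa D a b i j) (tau_ge0 : 0 <= tau D a b i j).

Lemma hasgrad_Fterm_inter (Xk : 'M[R]_(d, N)) :
  hasgrad (Fterm rho D a b i j) Xk (rho' (qf D a b i j Xk) *: (Xk *m q_mx D a b i j)).
Proof.
move=> E; set c0 := mnorm2 (q_mx D a b i j) Xk; set c := mnorm2 (q_mx D a b i j) E.
set g := minner (Xk *m q_mx D a b i j) E.
have -> : (fun s => Fterm rho D a b i j (Xk + s *: E)) =
          (fun s => rho (c0 + s * (2 * g) + s ^+ 2 * c) / 2).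
  apply/funext => s; rewrite /Fterm (negbTE a_neq_b) qf_mnorm2 mnorm2_expand ?q_mx_sym //.
  by rewrite mnorm2Zr minnerZr; congr (rho _ / 2); ring.
apply: is_derive_eq.
  apply/is_derive_half/(is_derive_rho_quadratic LK).
  - by rewrite /c0 -qf_mnorm2; exact: qf_ge0.
  - by rewrite /c -qf_mnorm2; exact: qf_ge0.
  - by move=> /(mnorm2_q_mx_eq0 _ kappa_ge0 tau_ge0 _ E); rewrite -/g => ->; rewrite mulr0.
by rewrite minnerZl qf_mnorm2 -/c0 -/g; field.
Qed.

Lemma Eterm_expand (Xk W : 'M[R]_(d, N)) :
  Eterm rho rho' D a b i j (Xk + W) Xk =
    1 / 2 * (omega rho' D a b i j Xk * pdec D a b i j W)
    + minner (rho' (qf D a b i j Xk) *: (Xk *m q_mx D a b i j)) W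
    + Fterm rho D a b i j Xk.
Proof.
rewrite /Eterm [Xk + W - Xk]addrC addKr (hasgrad_grad (hasgrad_Fterm_inter Xk)).
by rewrite [in RHS]mulrA.
Qed.

Lemma Fterm_le_Eterm (X Xk : 'M[R]_(d, N)) : rotation (rotm D a b i j) ->
  Fterm rho D a b i j X <= Eterm rho rho' D a b i j X Xk.
Proof.
move=> rot; rewrite -[X](subrK Xk) [_ + Xk]addrC Eterm_expand; move: (X - Xk) => W.
rewrite /omega /Fterm (negbTE a_neq_b) minnerZl.
have qX : qf D a b i j (Xk + W) =
    qf D a b i j Xk + 2 * minner (Xk *m q_mx D a b i j) W + qf D a b i j W.
  by rewrite !qf_mnorm2 mnorm2_expand ?q_mx_sym.
have q_ge0 := qf_ge0 D kappa_ge0 tau_ge0.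
have := loss_kernel_tangent LK _ _ (q_ge0 Xk) (q_ge0 (Xk + W)).
have /andP[r_ge0 _] := loss_kernel_deriv_bounds LK _ (q_ge0 Xk).
have := ler_wpM2l r_ge0 (qf_le_pdec _ kappa_ge0 tau_ge0 W rot).
rewrite qX; set r := rho' _; set g := minner _ _.
move: (qf D a b i j W) (pdec D a b i j W) => q p; lra.
Qed.

End EdgeTerms.

Section EdgeSums.
Context {R : realType} {d A : nat} {n : 'I_A -> nat} (D : pgo_data R d A n).

Definition sum_intra {V : zmodType} (F : forall a : 'I_A, 'I_(n a) * 'I_(n a) -> V) : V :=
  \sum_(a < A) \sum_(e in edges D a a) F a e.

Definition sum_inter {V : zmodType} (F : forall a b : 'I_A, 'I_(n a) * 'I_(n b) -> V) : V :=
  \sum_(a < A) \sum_(b < A | b != a) \sum_(e in edges D a b) F a b e.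

Lemma sum_intra_morph {V W : zmodType} (f : V -> W) F :
  {morph f : x y / x + y} -> f 0 = 0 -> f (sum_intra F) = sum_intra (fun a e => f (F a e)).
Proof.
move=> fD f0; rewrite /sum_intra (big_morph f fD f0); apply: eq_bigr => a _.
by rewrite (big_morph f fD f0).
Qed.

Lemma sum_inter_morph {V W : zmodType} (f : V -> W) F :
  {morph f : x y / x + y} -> f 0 = 0 -> f (sum_inter F) = sum_inter (fun a b e => f (F a b e)).
Proof.
move=> fD f0; rewrite /sum_inter (big_morph f fD f0); apply: eq_bigr => a _.
rewrite (big_morph f fD f0); apply: eq_bigr => b _.
by rewrite (big_morph f fD f0).
Qed.

Lemma eq_sum_intra {V : zmodType} (F G : forall a : 'I_A, 'I_(n a) * 'I_(n a) -> V) :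
  (forall a e, e \in edges D a a -> F a e = G a e) -> sum_intra F = sum_intra G.
Proof. by move=> H; apply: eq_bigr => a _; apply: eq_bigr => e; apply: H. Qed.

Lemma eq_sum_inter {V : zmodType} (F G : forall a b : 'I_A, 'I_(n a) * 'I_(n b) -> V) :
  (forall a b e, b != a -> e \in edges D a b -> F a b e = G a b e) -> sum_inter F = sum_inter G.
Proof.
move=> H; apply: eq_bigr => a _; apply: eq_bigr => b ba; apply: eq_bigr => e; exact: H.
Qed.

Lemma sum_intraD {V : zmodType} (F G : forall a : 'I_A, 'I_(n a) * 'I_(n a) -> V) :
  sum_intra (fun a e => F a e + G a e) = sum_intra F + sum_intra G.
Proof. by rewrite /sum_intra -big_split; apply: eq_bigr => a _; rewrite big_split. Qed.

Lemma sum_interD {V : zmodType} (F G : forall a b : 'I_A, 'I_(n a) * 'I_(n b) -> V) :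
  sum_inter (fun a b e => F a b e + G a b e) = sum_inter F + sum_inter G.
Proof.
rewrite /sum_inter -big_split; apply: eq_bigr => a _; rewrite -big_split.
by apply: eq_bigr => b _; rewrite big_split.
Qed.

Lemma sum_intraMr (c : R) F : sum_intra (fun a e => c * F a e) = c * sum_intra F.
Proof. by rewrite (sum_intra_morph _ _ (mulrDr c) (mulr0 c)). Qed.

Lemma sum_interMr (c : R) F : sum_inter (fun a b e => c * F a b e) = c * sum_inter F.
Proof. by rewrite (sum_inter_morph _ _ (mulrDr c) (mulr0 c)). Qed.

Lemma ler_sum_inter (F G : forall a b : 'I_A, 'I_(n a) * 'I_(n b) -> R) :
  (forall a b e, b != a -> e \in edges D a b -> F a b e <= G a b e) ->
  sum_inter F <= sum_inter G.
Proof.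
move=> H; apply: ler_sum => a _; apply: ler_sum => b ba; apply: ler_sum => e; exact: H.
Qed.

Lemma sum_intra_ge0 (F : forall a : 'I_A, 'I_(n a) * 'I_(n a) -> R) :
  (forall a e, e \in edges D a a -> 0 <= F a e) -> 0 <= sum_intra F.
Proof. by move=> H; apply: sumr_ge0 => a _; apply: sumr_ge0 => e; apply: H. Qed.

Lemma sum_inter_ge0 (F : forall a b : 'I_A, 'I_(n a) * 'I_(n b) -> R) :
  (forall a b e, b != a -> e \in edges D a b -> 0 <= F a b e) -> 0 <= sum_inter F.
Proof.
move=> H; apply: sumr_ge0 => a _; apply: sumr_ge0 => b ba; apply: sumr_ge0 => e; exact: H.
Qed.

Lemma blockdiag_sum_intra F : (forall a e, blockdiag (F a e)) -> @blockdiag R d A n (sum_intra F).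
Proof. by move=> H; apply: blockdiag_sum => a _; apply: blockdiag_sum => e _. Qed.

Lemma blockdiag_sum_inter F :
  (forall a b e, blockdiag (F a b e)) -> @blockdiag R d A n (sum_inter F).
Proof.
by move=> H; apply: blockdiag_sum => a _; apply: blockdiag_sum => b _; apply: blockdiag_sum.
Qed.

Lemma FobjE rho (X : 'M[R]_(d, Ntot d n)) :
  Fobj rho D X = sum_intra (fun a e => Fterm rho D a a e.1 e.2 X)
                 + sum_inter (fun a b e => Fterm rho D a b e.1 e.2 X).
Proof. by []. Qed.

Lemma GsurE rho rho' xi (X Xk : 'M[R]_(d, Ntot d n)) :
  Gsur rho rho' D xi X Xk =
    sum_intra (fun a e => Fterm rho D a a e.1 e.2 X)
    + sum_inter (fun a b e => Eterm rho rho' D a b e.1 e.2 X Xk) + xi / 2 * fnorm2 (X - Xk).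
Proof. by []. Qed.

End EdgeSums.

Section SurrogateMatrices.
Context {R : realType} {d A : nat} {n : 'I_A -> nat} (D : pgo_data R d A n).
Context (rho' : R -> R) (xi : R).
Local Notation N := (Ntot d n).

(* The Hessian of the surrogate when the inter-node edges carry weights w:
   w = omega^(k) gives Gamma^(k), and w = 1 the uniform bound Gamma. *)
Definition surrogate_mx (w : forall a b : 'I_A, 'I_(n a) * 'I_(n b) -> R) : 'M[R]_N :=
  sum_intra D (fun a e => q_mx D a a e.1 e.2)
  + sum_inter D (fun a b e => w a b e *: p_mx D a b e.1 e.2) + xi *: 1%:M.

Definition Gamk (Xk : 'M[R]_(d, N)) := surrogate_mx (fun a b e => omega rho' D a b e.1 e.2 Xk).

Definition Gamma_bound := surrogate_mx (fun _ _ _ => 1).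

Definition gradF (Xk : 'M[R]_(d, N)) : 'M[R]_(d, N) :=
  sum_intra D (fun a e => Xk *m q_mx D a a e.1 e.2)
  + sum_inter D (fun a b e => rho' (qf D a b e.1 e.2 Xk) *: (Xk *m q_mx D a b e.1 e.2)).

End SurrogateMatrices.

Section Surrogate.
Context {R : realType} {d A : nat} {n : 'I_A -> nat} {D : pgo_data R d A n}.
Context {rho rho' : R -> R} {xi : R}.
Hypothesis LK : loss_kernel rho rho'.
Hypothesis xi_ge0 : 0 <= xi.
Hypothesis d_gt0 : (0 < d)%N.
Hypothesis edgeP : forall {a b} {e : 'I_(n a) * 'I_(n b)}, e \in edges D a b ->
  [/\ rotation (rotm D a b e.1 e.2), 0 <= kappa D a b e.1 e.2 & 0 <= tau D a b e.1 e.2].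
Local Notation N := (Ntot d n).

Lemma mnorm2_surrogate_mx w Y : mnorm2 (surrogate_mx D xi w) Y =
  sum_intra D (fun a e => qf D a a e.1 e.2 Y)
  + sum_inter D (fun a b e => w a b e * pdec D a b e.1 e.2 Y) + xi * fnorm2 Y.
Proof.
have mnD : {morph mnorm2^~ Y : M1 M2 / M1 + M2} by move=> M1 M2; exact: mnorm2Dl.
rewrite /surrogate_mx !mnorm2Dl mnorm2Zl mnorm2_1.
rewrite (sum_intra_morph _ _ _ mnD (mnorm2_0l Y)) (sum_inter_morph _ _ _ mnD (mnorm2_0l Y)).
congr (_ + _ + _).
  by apply: eq_sum_intra => a e _; rewrite qf_mnorm2.
by apply: eq_sum_inter => a b e _ _; rewrite mnorm2Zl pdec_mnorm2.
Qed.

Lemma surrogate_mx_sym w : (surrogate_mx D xi w)^T = surrogate_mx D xi w.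
Proof.
have trD : {morph @trmx R N N : x y / x + y} by move=> x y; exact: linearD.
rewrite /surrogate_mx !linearD /= linearZ /= trmx1.
rewrite (sum_intra_morph _ _ _ trD (trmx0 _ _ _)) (sum_inter_morph _ _ _ trD (trmx0 _ _ _)).
congr (_ + _ + _).
  by apply: eq_sum_intra => a e _; rewrite q_mx_sym.
by apply: eq_sum_inter => a b e _ _; rewrite linearZ /= p_mx_sym.
Qed.

Lemma blockdiag_surrogate_mx w : blockdiag (surrogate_mx D xi w).
Proof.
apply: blockdiagD; [apply: blockdiagD|].
- by apply: blockdiag_sum_intra => a e; exact: blockdiag_q_mx.
- by apply: blockdiag_sum_inter => a b e; apply/blockdiagZ/blockdiag_p_mx.
- exact/blockdiagZ/blockdiag1.
Qed.

Lemma psd_surrogate_mx w :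
  (forall a b e, b != a -> e \in edges D a b -> 0 <= w a b e) -> psd (surrogate_mx D xi w).
Proof.
move=> w_ge0; apply: (@psd_mnorm2 _ d _ _ d_gt0 (surrogate_mx_sym w)) => Y.
rewrite mnorm2_surrogate_mx; apply: addr_ge0; [apply: addr_ge0|].
- by apply: sum_intra_ge0 => a e /edgeP[_ k0 t0]; exact: qf_ge0.
- apply: sum_inter_ge0 => a b e ba He; have [_ k0 t0] := edgeP He.
  by rewrite mulr_ge0 ?w_ge0 // pdec_ge0.
- by rewrite mulr_ge0 // fnorm2_ge0.
Qed.

Lemma psd_surrogate_mxB w1 w2 :
  (forall a b e, b != a -> e \in edges D a b -> w2 a b e <= w1 a b e) ->
  psd (surrogate_mx D xi w1 - surrogate_mx D xi w2).
Proof.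
move=> w21; apply: (@psd_mnorm2 _ d _ _ d_gt0) => [|Y].
  by rewrite linearB /= !surrogate_mx_sym.
rewrite mnorm2Bl !mnorm2_surrogate_mx subr_ge0 lerD2r lerD2l.
apply: ler_sum_inter => a b e ba He; have [_ k0 t0] := edgeP He.
by apply: ler_wpM2r; [exact: pdec_ge0 | exact: w21].
Qed.

Lemma omega_inter_bounds Xk {a b} {e : 'I_(n a) * 'I_(n b)} : b != a -> e \in edges D a b ->
  0 <= omega rho' D a b e.1 e.2 Xk <= 1.
Proof.
move=> ba He; have [_ k0 t0] := edgeP He.
by rewrite /omega eq_sym (negbTE ba); exact/(loss_kernel_deriv_bounds LK)/qf_ge0.
Qed.

Lemma psd_Gamk Xk : psd (Gamk D rho' xi Xk).
Proof. by apply: psd_surrogate_mx => a b e ba /(omega_inter_bounds Xk ba)/andP[]. Qed.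

Lemma blockdiag_Gamk Xk : blockdiag (Gamk D rho' xi Xk).
Proof. exact: blockdiag_surrogate_mx. Qed.

Lemma psd_Gamma_bound : psd (Gamma_bound D xi).
Proof. exact: psd_surrogate_mx. Qed.

Lemma psd_Gamma_boundB Xk : psd (Gamma_bound D xi - Gamk D rho' xi Xk).
Proof. by apply: psd_surrogate_mxB => a b e ba /(omega_inter_bounds Xk ba)/andP[]. Qed.

Lemma psd_GamkB Xk (Mk : 'M[R]_N) : Mk^T = Mk -> is_Mk rho' D Xk Mk ->
  psd (Gamk D rho' xi Xk - Mk).
Proof.
move=> MkT HMk; apply: (@psd_mnorm2 _ d _ _ d_gt0) => [|Y].
  by rewrite linearB /= surrogate_mx_sym MkT.
have HMkY : mnorm2 Mk Y = sum_intra D (fun a e => qf D a a e.1 e.2 Y)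
    + sum_inter D (fun a b e => omega rho' D a b e.1 e.2 Xk * qf D a b e.1 e.2 Y) := HMk Y.
rewrite mnorm2Bl mnorm2_surrogate_mx HMkY subr_ge0.
have : sum_inter D (fun a b e => omega rho' D a b e.1 e.2 Xk * qf D a b e.1 e.2 Y)
    <= sum_inter D (fun a b e => omega rho' D a b e.1 e.2 Xk * pdec D a b e.1 e.2 Y).
  apply: ler_sum_inter => a b e ba He; have [rot k0 t0] := edgeP He.
  have /andP[omega_ge0 _] := omega_inter_bounds Xk ba He.
  by rewrite ler_wpM2l // qf_le_pdec.
have := mulr_ge0 xi_ge0 (fnorm2_ge0 Y); lra.
Qed.

Lemma hasgrad_Fobj Xk : hasgrad (Fobj rho D) Xk (gradF D rho' Xk).
Proof.
apply: hasgradD.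
  by apply: hasgrad_big => a _; apply: hasgrad_big => e _; exact: hasgrad_Fterm_intra.
apply: hasgrad_big => a _; apply: hasgrad_big => b ba; apply: hasgrad_big => e He.
have [_ k0 t0] := edgeP He; apply: hasgrad_Fterm_inter => //; by rewrite eq_sym.
Qed.

Lemma Gsur_expand X Xk : Gsur rho rho' D xi X Xk =
  1 / 2 * mnorm2 (Gamk D rho' xi Xk) (X - Xk)
  + minner (grad (Fobj rho D) Xk) (X - Xk) + Fobj rho D Xk.
Proof.
rewrite (hasgrad_grad (hasgrad_Fobj Xk)).
suff expand W : Gsur rho rho' D xi (Xk + W) Xk = 1 / 2 * mnorm2 (Gamk D rho' xi Xk) W
    + minner (gradF D rho' Xk) W + Fobj rho D Xk.
  by rewrite -expand [Xk + _]addrC subrK.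
rewrite GsurE [Xk + W - Xk]addrC addKr.
rewrite (eq_sum_intra _ _ _ (fun a e _ => Fterm_intra_expand D rho a e.1 e.2 Xk W)).
rewrite (eq_sum_inter _ _ (fun a b e => 1 / 2 * (omega rho' D a b e.1 e.2 Xk * pdec D a b e.1 e.2 W)
    + minner (rho' (qf D a b e.1 e.2 Xk) *: (Xk *m q_mx D a b e.1 e.2)) W
    + Fterm rho D a b e.1 e.2 Xk)); last first.
  move=> a b e ba He; have [_ k0 t0] := edgeP He.
  by rewrite Eterm_expand // eq_sym.
rewrite !sum_intraD !sum_interD sum_intraMr sum_interMr.
rewrite mnorm2_surrogate_mx FobjE /gradF minnerDl.
have minD : {morph minner^~ W : x y / x + y} by move=> x y; exact: minnerDl.
rewrite (sum_intra_morph _ _ _ minD (minner0l W)) (sum_inter_morph _ _ _ minD (minner0l W)).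
lra.
Qed.

Lemma Gsur_blockwise X Xk : Gsur rho rho' D xi X Xk =
  \sum_(a < A) (1 / 2 * mnorm2 (submxblock (Gamk D rho' xi Xk) a a) (blk X a - blk Xk a)
                + minner (blk (grad (Fobj rho D) Xk) a) (blk X a - blk Xk a))
  + Fobj rho D Xk.
Proof.
rewrite Gsur_expand -{1}(blockdiag_mxdiag _ (blockdiag_Gamk Xk)) mnorm2_mxdiag minner_blk.
rewrite mulr_sumr -big_split /=; congr (_ + _); apply: eq_bigr => a _.
by rewrite /blk submxrowB.
Qed.

Lemma Fobj_le_Gsur X Xk : Fobj rho D X <= Gsur rho rho' D xi X Xk.
Proof.
rewrite FobjE GsurE.
have : sum_inter D (fun a b e => Fterm rho D a b e.1 e.2 X)
    <= sum_inter D (fun a b e => Eterm rho rho' D a b e.1 e.2 X Xk).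
  apply: ler_sum_inter => a b e ba He; have [rot k0 t0] := edgeP He.
  by apply: Fterm_le_Eterm => //; rewrite eq_sym.
have := mulr_ge0 (divr_ge0 xi_ge0 (ler0n _ 2)) (fnorm2_ge0 (X - Xk)); lra.
Qed.

Lemma Gsur_at_center Xk : Gsur rho rho' D xi Xk Xk = Fobj rho D Xk.
Proof. by rewrite Gsur_expand subrr mnorm2_0r minner0r mulr0 !add0r. Qed.

End Surrogate.

Theorem proposition3 (R : realType) (d A : nat) (n : 'I_A -> nat)
    (D : pgo_data R d A n) (rho rho' : R -> R) (xi : R) :
  (2 <= d)%N ->
  (forall a : 'I_A, (0 < n a)%N) ->
  (forall (a b : 'I_A) (i : 'I_(n a)) (j : 'I_(n b)), (i, j) \in edges D a b ->
     rotation (rotm D a b i j) /\ 0 <= kappa D a b i j /\ 0 <= tau D a b i j) ->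
  loss_kernel rho rho' ->
  0 <= xi ->
  exists Gam : 'M[R]_(Ntot d n), psd Gam /\
  exists Gk : 'M[R]_(d, Ntot d n) -> forall a : 'I_A, 'M[R]_(bdim d n a),
  forall Xk : 'M[R]_(d, Ntot d n), feasible Xk ->
    (forall a : 'I_A, psd (Gk Xk a)) /\
    (* (a) *)
    (forall X : 'M[R]_(d, Ntot d n),
       Gsur rho rho' D xi X Xk =
         \sum_(a < A) (1 / 2 * mnorm2 (Gk Xk a) (blk X a - blk Xk a)
                       + minner (blk (grad (Fobj rho D) Xk) a) (blk X a - blk Xk a))
         + Fobj rho D Xk) /\
    (* (b) *)
    (forall X : 'M[R]_(d, Ntot d n),
       Gsur rho rho' D xi X Xk =
         1 / 2 * mnorm2 (mxdiag (Gk Xk)) (X - Xk)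
         + minner (grad (Fobj rho D) Xk) (X - Xk) + Fobj rho D Xk) /\
    (forall X : 'M[R]_(d, Ntot d n), Fobj rho D X <= Gsur rho rho' D xi X Xk) /\
    Gsur rho rho' D xi Xk Xk = Fobj rho D Xk /\
    (* (c) *)
    (forall Mk : 'M[R]_(Ntot d n), Mk^T = Mk -> is_Mk rho' D Xk Mk ->
       psd (mxdiag (Gk Xk) - Mk)) /\
    (* (d) *)
    psd (Gam - mxdiag (Gk Xk)).
Proof.
move=> d_ge2 _ edge_props LK xi_ge0.
have d_gt0 : (0 < d)%N by apply: leq_trans d_ge2.
have edgeP a b (e : 'I_(n a) * 'I_(n b)) : e \in edges D a b ->
    [/\ rotation (rotm D a b e.1 e.2), 0 <= kappa D a b e.1 e.2 & 0 <= tau D a b e.1 e.2].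
  by case: e => i j /edge_props[? []].
exists (Gamma_bound D xi); split; first exact: psd_Gamma_bound.
exists (fun Xk a => submxblock (Gamk D rho' xi Xk) a a) => Xk _.
rewrite (blockdiag_mxdiag _ (blockdiag_Gamk Xk)).
have Gamk_psd := psd_Gamk LK xi_ge0 d_gt0 edgeP Xk.
split; first by move=> a; exact: psd_submxblock Gamk_psd.
split; first by move=> X; exact: Gsur_blockwise LK edgeP X Xk.
split; first by move=> X; exact: Gsur_expand LK edgeP X Xk.
split; first by move=> X; exact: Fobj_le_Gsur LK xi_ge0 edgeP X Xk.
split; first exact: Gsur_at_center LK edgeP Xk.
split; first exact: psd_GamkB LK xi_ge0 d_gt0 edgeP Xk.
exact: psd_Gamma_boundB LK d_gt0 edgeP Xk.
Qed.
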